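(* Suppose $\sigma_n\in[0,1]$ satisfies $\sigma_n\sim n^{-a}$ for some $a\in(0,1/2)$. Then almost surely there is a constant $C_\omega$ such that for all $N\ge2$, $$\max_{1\le m\le N}\max_{t\in[0,1]}\Bigl|\sum_{n=1}^{N-m}Y_{n+m}(\omega)\,Y_n(\omega)\,e(nt)\Bigr|\le C_\omega\,N^{1/2-a}\sqrt{\log N}.$$
   Context: Random setup: $(\Omega,\mathcal F,\mathbb P)$ is a probability space and $(X_n)_{n\in\mathbb N}$ are independent random variables with $\mathbb P(X_n=1)=\sigma_n$, $\mathbb P(X_n=0)=1-\sigma_n$; $Y_n=X_n-\sigma_n$. $e(t)=e^{2\pi i t}$. $u_n\sim v_n$ means $u_n/v_n$ converges to a nonzero constant. *)

From Stdlib Require Import Reals List.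
Open Scope R_scope.

Fixpoint rsum (f : nat -> R) (n : nat) : R :=
  match n with
  | O => 0
  | S k => rsum f k + f (S k)
  end.

(* Canonical sample space: omega n = true  <->  X_n(omega) = 1  (n >= 1;
   the coordinate 0 is unused). *)
Definition Omega := nat -> bool.

Definition X (omega : Omega) (n : nat) : R := if omega n then 1 else 0.
Definition Y (sigma : nat -> R) (omega : Omega) (n : nat) : R := X omega n - sigma n.

(* Cylinder set given by a prefix s = [b_1; ...; b_k]: omega (i+1) = b_(i+1). *)
Fixpoint in_cyl_from (j : nat) (s : list bool) (omega : Omega) : Prop :=
  match s with
  | nil => True
  | b :: s' => omega j = b /\ in_cyl_from (S j) s' omega
  end.
Definition in_cyl (s : list bool) (omega : Omega) : Prop := in_cyl_from 1 s omega.

(* Product-Bernoulli probability of a cylinder: P(X_j = b_j, 1 <= j <= k). *)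
Fixpoint cyl_prob_from (sigma : nat -> R) (j : nat) (s : list bool) : R :=
  match s with
  | nil => 1
  | b :: s' => (if b then sigma j else 1 - sigma j) * cyl_prob_from sigma (S j) s'
  end.
Definition cyl_prob (sigma : nat -> R) (s : list bool) : R := cyl_prob_from sigma 1 s.

(* A is a null set of the (completed) product measure of independent
   Bernoulli(sigma_n) variables: its Caratheodory outer measure is 0, i.e.
   for every eps > 0 it is covered by countably many cylinders of total
   probability <= eps. *)
Definition null_set (sigma : nat -> R) (A : Omega -> Prop) : Prop :=
  forall eps : R, 0 < eps ->
    exists cover : nat -> list bool,
      (forall omega, A omega -> exists j, in_cyl (cover j) omega) /\
      (forall K, sum_f_R0 (fun j => cyl_prob sigma (cover j)) K <= eps).

Definition almost_surely (sigma : nat -> R) (P : Omega -> Prop) : Prop :=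
  null_set sigma (fun omega => ~ P omega).

(* e(nt) = cos(2 pi n t) + i sin(2 pi n t); modulus of
   sum_{n=1}^{N-m} Y_{n+m} Y_n e(nt). *)
Definition corr_sum_abs (sigma : nat -> R) (omega : Omega) (N m : nat) (t : R) : R :=
  let re := rsum (fun n => Y sigma omega (n + m) * Y sigma omega n
                           * cos (2 * PI * INR n * t)) (N - m) in
  let im := rsum (fun n => Y sigma omega (n + m) * Y sigma omega n
                           * sin (2 * PI * INR n * t)) (N - m) in
  sqrt (re * re + im * im).

From Stdlib Require Import Reals Lra Lia List Permutation.
From Stdlib Require Import Classical ClassicalEpsilon FunctionalExtensionality.
Open Scope R_scope.

(* Fix the lag m and split 1 <= n <= N - m according to the parity of the block index
   floor((n-1)/m).  Within one half the pairs {n, n+m} are disjoint, so the exponential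
   moment of a half sum  sum_n d_n Y_(n+m) Y_n  with |d_n| <= 1 factorises into factors at
   most exp(2 th^2 sigma_n sigma_(n+m)).  As sigma_n <= K n^-a, the sum of the
   sigma_n sigma_(n+m) is O(N^(1-2a)), and a Chernoff bound at a threshold of order
   sqrt(N^(1-2a) log N) fails with probability at most N^-6.  In t the correlation sum is
   2 pi N^2-Lipschitz, so 8N^2+1 grid frequencies suffice; a union bound over m, the grid
   and the eight signed real and imaginary half sums bounds the probability of exceeding
   the threshold at level N by O(N^-2), and Borel-Cantelli (with explicit cylinder covers)
   shows that almost surely this happens for finitely many N only. *)

Fixpoint lsum {A} (f : A -> R) (l : list A) : R :=
  match l with nil => 0 | x :: l' => f x + lsum f l' end.

Fixpoint lprod {A} (f : A -> R) (l : list A) : R :=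
  match l with nil => 1 | x :: l' => f x * lprod f l' end.

Section ListSums.
Context {A : Type}.

Lemma lsum_app (f : A -> R) l1 l2 : lsum f (l1 ++ l2) = lsum f l1 + lsum f l2.
Proof. induction l1; simpl; [ring | rewrite IHl1; ring]. Qed.

Lemma lsum_ext (f g : A -> R) l : (forall x, In x l -> f x = g x) -> lsum f l = lsum g l.
Proof. induction l; simpl; intros H; [reflexivity|]. rewrite H, IHl; auto. Qed.

Lemma lsum_scal (f : A -> R) c l : lsum (fun x => c * f x) l = c * lsum f l.
Proof. induction l; simpl; [ring | rewrite IHl; ring]. Qed.

Lemma lsum_nonneg (f : A -> R) l : (forall x, 0 <= f x) -> 0 <= lsum f l.
Proof. intro H; induction l; simpl; [lra|]. specialize (H a); lra. Qed.

Lemma lsum_le (f g : A -> R) l : (forall x, In x l -> f x <= g x) -> lsum f l <= lsum g l.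
Proof. induction l; simpl; intro H; [lra|]. apply Rplus_le_compat; auto. Qed.

Lemma lsum_ge_elem (f : A -> R) l x : (forall y, 0 <= f y) -> In x l -> f x <= lsum f l.
Proof.
  intro H; induction l; simpl; intros Hx; [contradiction|].
  assert (0 <= lsum f l) by (apply lsum_nonneg; auto).
  specialize (H a); destruct Hx as [<- | Hx]; [lra|]. specialize (IHl Hx); lra.
Qed.

Lemma lsum_le_length (f : A -> R) l c :
  (forall x, In x l -> f x <= c) -> lsum f l <= INR (length l) * c.
Proof.
  induction l; intros H; [simpl; lra|]. cbn [lsum length]. rewrite S_INR.
  assert (H1 := H a (or_introl eq_refl)).
  assert (H2 := IHl (fun x Hx => H x (or_intror Hx))). lra.
Qed.

Lemma lprod_nonneg (f : A -> R) l : (forall x, 0 <= f x) -> 0 <= lprod f l.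
Proof. intro H; induction l; simpl; [lra|]. apply Rmult_le_pos; auto. Qed.

Lemma exp_lsum (f : A -> R) l : exp (lsum f l) = lprod (fun x => exp (f x)) l.
Proof.
  induction l; simpl; [apply exp_0|]. rewrite exp_plus, IHl. reflexivity.
Qed.

Lemma lsum_filter_split (q : A -> bool) (f : A -> R) l :
  lsum f l = lsum f (filter (fun n => Bool.eqb (q n) true) l) +
             lsum f (filter (fun n => Bool.eqb (q n) false) l).
Proof. induction l; simpl; [ring|]. destruct (q a); simpl; rewrite IHl; ring. Qed.

Lemma lsum_filter_le (q : A -> bool) (f : A -> R) l :
  (forall x, In x l -> 0 <= f x) -> lsum f (filter q l) <= lsum f l.
Proof.
  intro H; induction l; simpl; [lra|].
  assert (IH := IHl (fun x Hx => H x (or_intror Hx))).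
  assert (H0 := H a (or_introl eq_refl)).
  destruct (q a); simpl; lra.
Qed.

End ListSums.

Lemma lsum_concat {A B} (f : B -> R) (blk : A -> list B) l :
  lsum f (concat (map blk l)) = lsum (fun x => lsum f (blk x)) l.
Proof. induction l; simpl; [reflexivity|]. rewrite lsum_app, IHl; reflexivity. Qed.

Lemma rsum_lsum f M : rsum f M = lsum f (seq 1 M).
Proof.
  induction M; [reflexivity|]. simpl rsum. rewrite seq_S, lsum_app, IHM. simpl.
  replace (1 + M)%nat with (S M) by lia. ring.
Qed.

Lemma telescope_inv_pronic a k : (2 <= a)%nat ->
  lsum (fun N => 1 / (INR N * (INR N - 1))) (seq a k) =
  1 / (INR a - 1) - 1 / (INR (a + k) - 1).
Proof.
  revert a; induction k as [|k IH]; intros a Ha; simpl.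
  - rewrite Nat.add_0_r; ring.
  - rewrite IH by lia. replace (S a + k)%nat with (a + S k)%nat by lia.
    rewrite S_INR. assert (2 <= INR a) by (apply (le_INR 2); lia).
    assert (2 <= INR (a + S k)) by (apply (le_INR 2); lia).
    field; lra.
Qed.

(** * Expectation over finitely many coordinates *)

Definition update (w : Omega) (i : nat) (b : bool) : Omega :=
  fun k => if Nat.eqb k i then b else w k.

Definition ignores (i : nat) (f : Omega -> R) : Prop :=
  forall w b, f (update w i b) = f w.

Lemma update_update_same w i b c : update (update w i b) i c = update w i c.
Proof. extensionality k; unfold update; destruct (Nat.eqb k i); reflexivity. Qed.

Lemma update_comm w i j b c : i <> j -> update (update w i b) j c = update (update w j c) i b.
Proof.
  intro H; extensionality k; unfold update.
  destruct (Nat.eqb_spec k j), (Nat.eqb_spec k i); subst; try reflexivity; lia.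
Qed.

Section Expectation.
Variable sg : nat -> R.

Definition avg_coord (i : nat) (f : Omega -> R) : Omega -> R :=
  fun w => sg i * f (update w i true) + (1 - sg i) * f (update w i false).

(* [expect l f w] integrates [f] over the coordinates listed in [l], each an independent
   Bernoulli(sg i), while the remaining coordinates are frozen to those of [w]. *)
Fixpoint expect (l : list nat) (f : Omega -> R) : Omega -> R :=
  match l with nil => f | i :: l' => avg_coord i (expect l' f) end.

Lemma avg_coord_comm i j f : avg_coord i (avg_coord j f) = avg_coord j (avg_coord i f).
Proof.
  extensionality w; unfold avg_coord.
  destruct (Nat.eq_dec i j) as [-> | Hij]; [reflexivity|].
  rewrite !(update_comm _ i j) by exact Hij. ring.
Qed.

Lemma expect_perm l l' f : Permutation l l' -> expect l f = expect l' f.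
Proof.
  induction 1; simpl; try reflexivity.
  - rewrite IHPermutation; reflexivity.
  - apply avg_coord_comm.
  - congruence.
Qed.

Lemma expect_app l1 l2 f : expect (l1 ++ l2) f = expect l1 (expect l2 f).
Proof. induction l1; simpl; congruence. Qed.

Lemma ignores_avg_coord i j f : ignores j f -> ignores j (avg_coord i f).
Proof.
  intros H w b; unfold avg_coord.
  destruct (Nat.eq_dec i j) as [-> | Hij].
  - rewrite !update_update_same; reflexivity.
  - rewrite !(update_comm _ j i) by lia. rewrite !H. reflexivity.
Qed.

Lemma ignores_expect l j f : ignores j f -> ignores j (expect l f).
Proof. induction l; simpl; intro H; [exact H|]. apply ignores_avg_coord; auto. Qed.

Lemma expect_mul_l l (c f : Omega -> R) :
  (forall i, In i l -> ignores i c) ->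
  expect l (fun w => c w * f w) = fun w => c w * expect l f w.
Proof.
  induction l as [|i l IH]; simpl; intro H; [reflexivity|].
  rewrite IH by auto. extensionality w; unfold avg_coord.
  rewrite !(H i (or_introl eq_refl)). ring.
Qed.

Lemma expect_ignored l f : (forall i, In i l -> ignores i f) -> expect l f = f.
Proof.
  induction l as [|i l IH]; simpl; intro H; [reflexivity|].
  rewrite IH by auto. extensionality w; unfold avg_coord.
  rewrite !(H i (or_introl eq_refl)). ring.
Qed.

Lemma expect_add l f g :
  expect l (fun w => f w + g w) = fun w => expect l f w + expect l g w.
Proof.
  induction l as [|i l IH]; simpl; [reflexivity|].
  rewrite IH. extensionality w; unfold avg_coord; ring.
Qed.

Lemma expect_scal l k f : expect l (fun w => k * f w) = fun w => k * expect l f w.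
Proof. apply (expect_mul_l l (fun _ => k)). intros i _ w b; reflexivity. Qed.

Lemma expect_lsum {A} l (F : A -> Omega -> R) xs w :
  expect l (fun w => lsum (fun x => F x w) xs) w = lsum (fun x => expect l (F x) w) xs.
Proof.
  revert w; induction xs as [|x xs IH]; intro w; simpl.
  - rewrite expect_ignored; [reflexivity|]. intros i _ v b; reflexivity.
  - rewrite (expect_add l (F x) (fun w => lsum (fun x => F x w) xs)), IH. reflexivity.
Qed.

Lemma expect_le l f g :
  (forall i, In i l -> 0 <= sg i <= 1) -> (forall w, f w <= g w) ->
  forall w, expect l f w <= expect l g w.
Proof.
  induction l as [|i l IH]; simpl; intros Hs Hfg w; [auto|].
  unfold avg_coord. destruct (Hs i (or_introl eq_refl)).
  assert (IH' := IH (fun j Hj => Hs j (or_intror Hj)) Hfg).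
  apply Rplus_le_compat; apply Rmult_le_compat_l; try lra; apply IH'.
Qed.

Lemma expect_nonneg l f :
  (forall i, In i l -> 0 <= sg i <= 1) -> (forall w, 0 <= f w) -> forall w, 0 <= expect l f w.
Proof.
  intros Hs Hf w. assert (H := expect_le l (fun _ => 0) f Hs Hf w).
  rewrite expect_ignored in H; [exact H|]. intros i _ v b; reflexivity.
Qed.

Lemma expect_sublist l l' f :
  NoDup l -> NoDup l' -> incl l' l ->
  (forall i, In i l -> ~ In i l' -> ignores i f) ->
  expect l f = expect l' f.
Proof.
  intros Hl Hl' Hincl Hign.
  set (rest := filter (fun i => if in_dec Nat.eq_dec i l' then false else true) l).
  assert (Hrest : forall i, In i rest <-> In i l /\ ~ In i l').
  { intro i. unfold rest. rewrite filter_In.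
    destruct (in_dec Nat.eq_dec i l'); split; try tauto; intros [_ H]; discriminate H. }
  assert (HP : Permutation l (l' ++ rest)).
  { apply NoDup_Permutation; [exact Hl| |].
    - apply NoDup_app; [exact Hl' | apply NoDup_filter, Hl|].
      intros i Hi Hr. apply Hrest in Hr. tauto.
    - intro i. rewrite in_app_iff, Hrest. split; [|intros [H|H]; [apply Hincl|]; tauto].
      intro H. destruct (in_dec Nat.eq_dec i l'); tauto. }
  rewrite (expect_perm _ _ _ HP), expect_app, (expect_ignored rest); [reflexivity|].
  intros i Hi. apply Hrest in Hi. apply Hign; tauto.
Qed.

End Expectation.

(** * Null sets from summable cylinder covers *)

Definition indic (P : Omega -> Prop) (w : Omega) : R :=
  if excluded_middle_informative (P w) then 1 else 0.

Definition depends_on_prefix (N : nat) (P : Omega -> Prop) : Prop :=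
  forall w w', (forall i, (1 <= i <= N)%nat -> w i = w' i) -> P w -> P w'.

Definition splice (w w' : Omega) (j k : nat) : Omega :=
  fun i => if andb (Nat.leb j i) (Nat.ltb i (j + k)) then w' i else w i.

(* The cylinders over the coordinates [j, j+k) on which [P] holds, the other
   coordinates being those of [w]. *)
Fixpoint cylinder_cover (P : Omega -> Prop) (j k : nat) (w : Omega) : list (list bool) :=
  match k with
  | O => if excluded_middle_informative (P w) then nil :: nil else nil
  | S k' => map (cons true) (cylinder_cover P (S j) k' (update w j true)) ++
            map (cons false) (cylinder_cover P (S j) k' (update w j false))
  end.

Lemma lsum_cyl_prob_cons sg j b L :
  lsum (cyl_prob_from sg j) (map (cons b) L) =
  (if b then sg j else 1 - sg j) * lsum (cyl_prob_from sg (S j)) L.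
Proof. induction L; simpl; [ring | rewrite IHL; ring]. Qed.

Lemma cylinder_cover_prob sg P j k w :
  lsum (cyl_prob_from sg j) (cylinder_cover P j k w) = expect sg (seq j k) (indic P) w.
Proof.
  revert j w; induction k as [|k IH]; intros j w; simpl.
  - unfold indic; destruct (excluded_middle_informative (P w)); simpl; ring.
  - rewrite lsum_app, !lsum_cyl_prob_cons, !IH. unfold avg_coord. ring.
Qed.

Lemma cylinder_cover_spec P j k w w' :
  P (splice w w' j k) -> exists s, In s (cylinder_cover P j k w) /\ in_cyl_from j s w'.
Proof.
  revert j w; induction k as [|k IH]; intros j w HP; simpl.
  - assert (E : splice w w' j 0 = w).
    { extensionality i; unfold splice.
      destruct (Nat.leb_spec j i), (Nat.ltb_spec i (j + 0)); simpl; auto; lia. }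
    rewrite E in HP. destruct (excluded_middle_informative (P w)); [|contradiction].
    exists nil; simpl; auto.
  - assert (E : splice w w' j (S k) = splice (update w j (w' j)) w' (S j) k).
    { extensionality i; unfold splice, update.
      destruct (Nat.leb_spec j i), (Nat.ltb_spec i (j + S k)),
               (Nat.leb_spec (S j) i), (Nat.ltb_spec i (S j + k)),
               (Nat.eqb_spec i j); subst; simpl; auto; lia. }
    rewrite E in HP. destruct (IH (S j) _ HP) as [s [Hin Hc]].
    exists (w' j :: s). split; [|simpl; auto].
    apply in_or_app. destruct (w' j); [left | right]; apply in_map; exact Hin.
Qed.

Section CylinderProbabilities.
Variable sg : nat -> R.
Hypothesis Hs : forall n, (1 <= n)%nat -> 0 <= sg n <= 1.

Lemma cyl_prob_from_nonneg j s : (1 <= j)%nat -> 0 <= cyl_prob_from sg j s.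
Proof.
  revert j; induction s as [|b s IH]; intros j Hj; simpl; [lra|].
  apply Rmult_le_pos; [destruct b; destruct (Hs j Hj); lra | apply IH; lia].
Qed.

(* A cylinder of probability at most 2^-k, used to pad blocks so that none is empty. *)
Fixpoint light_prefix (j k : nat) : list bool :=
  match k with
  | O => nil
  | S k' => (if Rle_dec (sg j) (1/2) then true else false) :: light_prefix (S j) k'
  end.

Lemma light_prefix_prob j k : (1 <= j)%nat -> cyl_prob_from sg j (light_prefix j k) <= (1/2) ^ k.
Proof.
  revert j; induction k as [|k IH]; intros j Hj; simpl; [lra|].
  assert (H1 := IH (S j) ltac:(lia)).
  assert (H2 := cyl_prob_from_nonneg (S j) (light_prefix (S j) k) ltac:(lia)).
  destruct (Hs j Hj). destruct (Rle_dec (sg j) (1/2)); apply Rmult_le_compat; lra.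
Qed.

End CylinderProbabilities.

Lemma half_pow_le_inv k : (1 <= k)%nat -> (1/2) ^ k <= 1 / INR k.
Proof.
  intro Hk. assert (Hk' : 1 <= INR k) by (apply (le_INR 1); exact Hk).
  assert (H2 : INR k <= 2 ^ k).
  { clear. induction k; [simpl; lra|]. rewrite S_INR. simpl pow.
    assert (1 <= 2 ^ k) by (apply pow_R1_Rle; lra). lra. }
  replace ((1/2)^k) with (/ 2 ^ k) by (rewrite <- pow_inv; f_equal; field).
  unfold Rdiv; rewrite Rmult_1_l. apply Rinv_le_contravar; lra.
Qed.

Lemma sum_nth_le {A} (wt : A -> R) (l : list A) d K :
  (forall x, 0 <= wt x) -> (K < length l)%nat ->
  sum_f_R0 (fun j => wt (nth j l d)) K <= lsum wt l.
Proof.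
  intros Hw; revert K; induction l as [|x l IH]; intros K HK; simpl in HK; [lia|].
  destruct K as [|K].
  - simpl. assert (0 <= lsum wt l) by (apply lsum_nonneg; auto). lra.
  - rewrite decomp_sum by lia. simpl pred. simpl nth.
    assert (H := IH K ltac:(lia)). simpl. lra.
Qed.

Lemma enumerate_blocks {A} (blk : nat -> list A) (N0 : nat) (d : A) :
  (forall N, blk N <> nil) ->
  exists e : nat -> A,
    (forall N x, (N0 <= N)%nat -> In x (blk N) -> exists j, e j = x) /\
    (forall wt : A -> R, (forall x, 0 <= wt x) -> forall K,
       sum_f_R0 (fun j => wt (e j)) K <= lsum (fun N => lsum wt (blk N)) (seq N0 (S K))).
Proof.
  intro Hne.
  set (upto := fun n => concat (map blk (seq N0 n))).
  assert (Hlen : forall n, (n <= length (upto n))%nat).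
  { assert (H : forall l, (length l <= length (concat (map blk l)))%nat).
    { induction l as [|N l IH]; simpl; [lia|]. rewrite length_app.
      destruct (blk N) eqn:E; [contradiction (Hne N) | simpl; lia]. }
    intro n. specialize (H (seq N0 n)). rewrite length_seq in H. exact H. }
  assert (Hpre : forall n n', (n <= n')%nat -> exists r, upto n' = (upto n ++ r)%list).
  { intros n n' Hn. exists (concat (map blk (seq (N0 + n) (n' - n)))).
    unfold upto. rewrite <- concat_app, <- map_app, <- seq_app. do 3 f_equal. lia. }
  exists (fun j => nth j (upto (S j)) d). split.
  - intros N x HN Hx. destruct (In_nth _ _ d Hx) as [i [Hi Hxi]].
    assert (HC : upto (S (N - N0)%nat) = (upto (N - N0)%nat ++ blk N)%list).
    { unfold upto. rewrite seq_S, map_app, concat_app. simpl.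
      rewrite app_nil_r. do 3 f_equal. lia. }
    set (j := (length (upto (N - N0)%nat) + i)%nat).
    assert (Hj : (N - N0 <= j)%nat) by (specialize (Hlen (N - N0)%nat); unfold j; lia).
    exists j. destruct (Hpre (S (N - N0)%nat) (S j) ltac:(lia)) as [r ->].
    rewrite app_nth1 by (rewrite HC, length_app; unfold j; lia).
    rewrite HC, app_nth2 by (unfold j; lia).
    replace (j - length (upto (N - N0)%nat))%nat with i by (unfold j; lia). exact Hxi.
  - intros wt Hwt K.
    rewrite (sum_eq _ (fun j => wt (nth j (upto (S K)) d))).
    2: { intros j Hj. destruct (Hpre (S j) (S K) ltac:(lia)) as [r ->].
         rewrite app_nth1; [reflexivity|]. specialize (Hlen (S j)); lia. }
    unfold upto at 1. rewrite <- lsum_concat.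
    apply sum_nth_le; [exact Hwt|]. specialize (Hlen (S K)); unfold upto in Hlen; lia.
Qed.

Lemma almost_surely_mono sg (P Q : Omega -> Prop) :
  (forall w, P w -> Q w) -> almost_surely sg P -> almost_surely sg Q.
Proof.
  intros HPQ HP eps Heps. destruct (HP eps Heps) as [cover [Hcov Hsum]].
  exists cover. split; [|exact Hsum]. intros w HQ. apply Hcov. intro Hw. exact (HQ (HPQ w Hw)).
Qed.

Lemma exists_nat_inv_le c eps : 0 < eps ->
  exists N0, (2 <= N0)%nat /\ c / (INR N0 - 1) <= eps.
Proof.
  intro Heps. destruct (INR_unbounded (Rabs c / eps)) as [n Hn].
  exists (n + 2)%nat. split; [lia|]. rewrite plus_INR. simpl INR.
  assert (0 <= INR n) by apply pos_INR.
  replace (INR n + (1 + 1) - 1) with (INR n + 1) by ring.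
  apply (Rmult_le_reg_r (INR n + 1)); [lra|].
  replace (c / (INR n + 1) * (INR n + 1)) with c by (field; lra).
  assert (Rabs c / eps * eps = Rabs c) by (field; lra).
  assert (c <= Rabs c) by apply RRle_abs. nra.
Qed.

Section BorelCantelli.
Variable sg : nat -> R.
Hypothesis Hs : forall n, (1 <= n)%nat -> 0 <= sg n <= 1.
Variable B : nat -> Omega -> Prop.
Variable c : R.
Hypothesis Hc : 0 <= c.
Hypothesis HB_prefix : forall N, depends_on_prefix N (B N).
Hypothesis HB_prob : forall N w, (2 <= N)%nat ->
  expect sg (seq 1 N) (indic (B N)) w <= c / (INR N * (INR N - 1)).

Let block (N : nat) : list (list bool) :=
  light_prefix sg 1 (N * (N - 1)) :: cylinder_cover (B N) 1 N (fun _ => false).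

Lemma block_prob_le N : (2 <= N)%nat ->
  lsum (cyl_prob sg) (block N) <= (c + 1) * (1 / (INR N * (INR N - 1))).
Proof.
  intro HN. assert (H2 : 2 <= INR N) by (apply (le_INR 2); lia).
  simpl lsum. unfold cyl_prob. rewrite cylinder_cover_prob.
  assert (Hpad : cyl_prob_from sg 1 (light_prefix sg 1 (N * (N - 1))) <= 1 / (INR N * (INR N - 1))).
  { eapply Rle_trans; [apply light_prefix_prob; auto|].
    replace (INR N * (INR N - 1)) with (INR (N * (N - 1))).
    - apply half_pow_le_inv. nia.
    - rewrite mult_INR, minus_INR by lia. simpl. ring. }
  assert (Hev := HB_prob N (fun _ => false) HN).
  replace (c / (INR N * (INR N - 1))) with (c * (1 / (INR N * (INR N - 1)))) in Hev
    by (field; lra).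
  lra.
Qed.

Lemma borel_cantelli : almost_surely sg (fun w => exists N0, forall N, (N0 <= N)%nat -> ~ B N w).
Proof.
  intros eps Heps.
  destruct (exists_nat_inv_le (c + 1) eps Heps) as [N0 [HN0 HN0eps]].
  destruct (enumerate_blocks block N0 nil) as [cover [Hcov Hsum]]; [discriminate|].
  exists cover. split.
  - intros w Hw.
    destruct (classic (exists N, (N0 <= N)%nat /\ B N w)) as [[N [HN HBN]] | Hno].
    + apply (HB_prefix N w (splice (fun _ => false) w 1 N)) in HBN.
      2: { intros i Hi. unfold splice.
           destruct (Nat.leb_spec 1 i), (Nat.ltb_spec i (1 + N)); simpl; auto; lia. }
      destruct (cylinder_cover_spec _ 1 N _ w HBN) as [s [Hin Hcyl]].
      destruct (Hcov N s HN (or_intror Hin)) as [j Hj].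
      exists j. rewrite Hj. exact Hcyl.
    + exfalso. apply Hw. exists N0. intros N HN HBN. apply Hno. exists N. auto.
  - intro K. eapply Rle_trans.
    { apply Hsum. intro s. apply cyl_prob_from_nonneg; auto. }
    eapply Rle_trans.
    { apply lsum_le. intros N HN. apply in_seq in HN. apply block_prob_le. lia. }
    rewrite lsum_scal, telescope_inv_pronic by lia.
    assert (2 <= INR N0) by (apply (le_INR 2); lia).
    assert (2 <= INR (N0 + S K)) by (apply (le_INR 2); lia).
    assert (0 < 1 / (INR (N0 + S K) - 1)) by (apply Rdiv_lt_0_compat; lra).
    replace ((c + 1) / (INR N0 - 1)) with ((c + 1) * (1 / (INR N0 - 1))) in HN0eps
      by (field; lra).
    nra.
Qed.

End BorelCantelli.

(** * Exponential moments of sums over disjoint pairs *)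

Lemma Rabs_le_inv x b : Rabs x <= b -> - b <= x <= b.
Proof. unfold Rabs; destruct (Rcase_abs x); intro; lra. Qed.

Lemma exp_le_quadratic x : Rabs x <= 1/2 -> exp x <= 1 + x + 2 * x ^ 2.
Proof.
  intro H. apply Rabs_le_inv in H.
  assert (H1 := exp_ineq1_le (- x)).
  assert (Hinv : exp x * exp (- x) = 1) by (rewrite <- exp_plus, Rplus_opp_r; apply exp_0).
  assert (0 < exp x) by apply exp_pos.
  assert (exp x * (1 + - x) <= 1) by (rewrite <- Hinv; apply Rmult_le_compat_l; lra).
  assert ((1 + x + 2 * x ^ 2) * (1 - x) >= 1) by nra.
  nra.
Qed.

(* The centred product [d (X' - u) (X - s)] of independent Bernoulli(u), Bernoulli(s)
   variables has mean 0 and second moment at most [s u], whence this sub-Gaussian bound. *)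
Lemma bernoulli_pair_exp_moment s u d th :
  0 <= s <= 1 -> 0 <= u <= 1 -> Rabs d <= 1 -> 0 <= th <= 1/2 ->
  s * (u * exp (th * (d * (1 - u) * (1 - s))) + (1 - u) * exp (th * (d * (0 - u) * (1 - s)))) +
  (1 - s) * (u * exp (th * (d * (1 - u) * (0 - s))) + (1 - u) * exp (th * (d * (0 - u) * (0 - s))))
  <= exp (2 * th ^ 2 * s * u).
Proof.
  intros Hs Hu Hd Ht.
  set (q := fun z => 1 + z + 2 * z ^ 2).
  assert (Hq : forall y z, - 1 <= y <= 1 -> - 1 <= z <= 1 ->
                           exp (th * (d * z * y)) <= q (th * (d * z * y))).
  { intros y z Hy Hz. apply exp_le_quadratic. rewrite !Rabs_mult, (Rabs_right th) by lra.
    assert (Rabs z <= 1) by (apply Rabs_le; lra). assert (Rabs y <= 1) by (apply Rabs_le; lra).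
    assert (0 <= Rabs d) by apply Rabs_pos. assert (0 <= Rabs z) by apply Rabs_pos.
    assert (0 <= Rabs y) by apply Rabs_pos.
    assert (Rabs d * Rabs z <= 1) by nra. assert (Rabs d * Rabs z * Rabs y <= 1) by nra. nra. }
  eapply Rle_trans with
    (s * (u * q (th * (d * (1 - u) * (1 - s))) + (1 - u) * q (th * (d * (0 - u) * (1 - s)))) +
     (1 - s) * (u * q (th * (d * (1 - u) * (0 - s))) + (1 - u) * q (th * (d * (0 - u) * (0 - s))))).
  { apply Rplus_le_compat; apply Rmult_le_compat_l; try lra;
      apply Rplus_le_compat; apply Rmult_le_compat_l; try lra; apply Hq; lra. }
  replace (s * (u * q (th * (d * (1 - u) * (1 - s))) + (1 - u) * q (th * (d * (0 - u) * (1 - s)))) +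
     (1 - s) * (u * q (th * (d * (1 - u) * (0 - s))) + (1 - u) * q (th * (d * (0 - u) * (0 - s)))))
    with (1 + 2 * th ^ 2 * s * u * (d ^ 2 * (1 - u) * (1 - s))) by (unfold q; ring).
  eapply Rle_trans; [|apply exp_ineq1_le].
  apply Rabs_le_inv in Hd.
  assert (0 <= d ^ 2 <= 1) by nra.
  assert (0 <= (1 - u) * (1 - s) <= 1) by nra.
  assert (0 <= d ^ 2 * (1 - u) * (1 - s) <= 1) by nra.
  assert (0 <= 2 * th ^ 2 * s * u) by (repeat apply Rmult_le_pos; nra).
  nra.
Qed.

Lemma Y_update_other sg w i b k : k <> i -> Y sg (update w i b) k = Y sg w k.
Proof. intro H; unfold Y, X, update. destruct (Nat.eqb_spec k i); [lia | reflexivity]. Qed.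

Lemma Y_update_same sg w i b : Y sg (update w i b) i = (if b then 1 else 0) - sg i.
Proof. unfold Y, X, update. rewrite Nat.eqb_refl. reflexivity. Qed.

Definition pair_coords (m : nat) (ps : list nat) : list nat :=
  flat_map (fun n => n :: (n + m)%nat :: nil) ps.

Lemma in_pair_coords m i ps :
  In i (pair_coords m ps) <-> exists n, In n ps /\ (i = n \/ i = n + m)%nat.
Proof.
  unfold pair_coords. rewrite in_flat_map. split.
  - intros [n [Hn Hi]]. exists n. simpl in Hi. split; [exact Hn|]. lia.
  - intros [n [Hn Hi]]. exists n. simpl. split; [exact Hn | lia].
Qed.

Section PairSums.
Variable sg : nat -> R.
Hypothesis Hs : forall n, (1 <= n)%nat -> 0 <= sg n <= 1.
Variables (th : R) (d : nat -> R) (m : nat).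

Definition pair_factor (n : nat) (w : Omega) : R :=
  exp (th * (d n * Y sg w (n + m) * Y sg w n)).

Lemma pair_factor_ignores n i : i <> n -> i <> (n + m)%nat -> ignores i (pair_factor n).
Proof.
  intros H1 H2 w b; unfold pair_factor.
  rewrite !Y_update_other by (apply not_eq_sym; assumption). reflexivity.
Qed.

Lemma pair_factors_ignores ps i : ~ In i (pair_coords m ps) ->
  ignores i (fun w => lprod (fun n => pair_factor n w) ps).
Proof.
  intros Hi w b. induction ps as [|n ps IH]; simpl; [reflexivity|].
  assert (Hn : ~ In i (n :: (n + m)%nat :: pair_coords m ps)) by exact Hi.
  rewrite pair_factor_ignores, IH; [reflexivity | | |]; intro; apply Hn; simpl; auto.
Qed.

Hypothesis Hth : 0 <= th <= 1/2.
Hypothesis Hd : forall n, Rabs (d n) <= 1.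
Hypothesis Hm : (1 <= m)%nat.

Lemma expect_pair_factor_le n w : (1 <= n)%nat ->
  expect sg (n :: (n + m)%nat :: nil) (pair_factor n) w <= exp (2 * th ^ 2 * sg n * sg (n + m)%nat).
Proof.
  intro Hn. unfold expect, avg_coord, pair_factor.
  assert (E : forall b c, Y sg (update (update w n b) (n + m) c) n = (if b then 1 else 0) - sg n).
  { intros. rewrite Y_update_other by lia. apply Y_update_same. }
  rewrite !E, !Y_update_same.
  apply bernoulli_pair_exp_moment; auto; apply Hs; lia.
Qed.

Lemma expect_pair_factors_le ps w :
  (forall n, In n ps -> (1 <= n)%nat) -> NoDup (pair_coords m ps) ->
  expect sg (pair_coords m ps) (fun w => lprod (fun n => pair_factor n w) ps) w <=
  lprod (fun n => exp (2 * th ^ 2 * sg n * sg (n + m)%nat)) ps.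
Proof.
  revert w; induction ps as [|n ps IH]; intros w Hps Hnd; [simpl; lra|].
  cbn [lprod]. assert (Hn := Hps n (or_introl eq_refl)).
  change (pair_coords m (n :: ps)) with ((n :: (n + m)%nat :: nil) ++ pair_coords m ps) in *.
  inversion Hnd as [|? ? Hn1 Hnd1]; subst. inversion Hnd1 as [|? ? Hn2 Hnd2]; subst.
  assert (Hcoords : forall i, In i (pair_coords m ps) -> 0 <= sg i <= 1).
  { intros i Hi. apply in_pair_coords in Hi as [k [Hk Hi]].
    assert (H1 := Hps k (or_intror Hk)). apply Hs. lia. }
  rewrite expect_app, (expect_mul_l sg (pair_coords m ps) (pair_factor n)).
  2: { intros i Hi. apply pair_factor_ignores; intro; subst; simpl in *; tauto. }
  set (rest := expect sg (pair_coords m ps) (fun w => lprod (fun n => pair_factor n w) ps)).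
  assert (Hrest : forall i, In i (n :: (n + m)%nat :: nil) -> ignores i rest).
  { intros i Hi. apply ignores_expect, pair_factors_ignores.
    simpl in Hi. destruct Hi as [<- | [<- | []]]; [|exact Hn2].
    intro Hc; apply Hn1; simpl; tauto. }
  replace (fun w => pair_factor n w * rest w) with (fun w => rest w * pair_factor n w)
    by (extensionality v; ring).
  rewrite (expect_mul_l sg _ rest (pair_factor n)) by exact Hrest.
  rewrite (Rmult_comm (exp _)).
  assert (0 <= rest w).
  { apply expect_nonneg; [exact Hcoords|]. intro.
    apply lprod_nonneg; intro; apply Rlt_le, exp_pos. }
  assert (0 <= expect sg (n :: (n + m)%nat :: nil) (pair_factor n) w).
  { apply expect_nonneg; [|intro; apply Rlt_le, exp_pos].
    intros i Hi. apply Hs. simpl in Hi. destruct Hi as [<- | [<- | []]]; lia. }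
  apply Rmult_le_compat; auto.
  - apply IH; auto. intros k Hk; apply Hps; simpl; auto.
  - apply expect_pair_factor_le, Hn.
Qed.

Lemma expect_exp_pair_sum_le ps N w :
  (forall n, In n ps -> (1 <= n)%nat /\ (n + m <= N)%nat) -> NoDup (pair_coords m ps) ->
  expect sg (seq 1 N) (fun w => exp (th * lsum (fun n => d n * Y sg w (n + m) * Y sg w n) ps)) w
  <= exp (2 * th ^ 2 * lsum (fun n => sg n * sg (n + m)%nat) ps).
Proof.
  intros Hps Hnd.
  assert (EF : (fun w => exp (th * lsum (fun n => d n * Y sg w (n + m) * Y sg w n) ps)) =
               (fun w => lprod (fun n => pair_factor n w) ps)).
  { extensionality v. rewrite <- lsum_scal, exp_lsum. reflexivity. }
  rewrite EF, (expect_sublist sg (seq 1 N) (pair_coords m ps)).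
  - eapply Rle_trans; [apply expect_pair_factors_le; auto; apply Hps|].
    rewrite <- lsum_scal, exp_lsum. right. clear.
    induction ps as [|n ps IH]; cbn [lprod]; [reflexivity|]. rewrite IH. do 2 f_equal. ring.
  - apply seq_NoDup.
  - exact Hnd.
  - intros i Hi. apply in_pair_coords in Hi as [n [Hn Hi]].
    destruct (Hps n Hn). apply in_seq. lia.
  - intros i _ Hi. apply pair_factors_ignores, Hi.
Qed.

End PairSums.

(** * The two half sums and their variance *)

(* [half_block m p M] keeps those [n <= M] lying in the blocks [(k m, (k+1) m]] with [k] of
   parity [p]; the pairs [{n, n+m}] with [n] in one half block are then pairwise disjoint. *)
Definition half_block (m : nat) (p : bool) (M : nat) : list nat :=
  filter (fun n => Bool.eqb (Nat.even ((n - 1) / m)) p) (seq 1 M).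

Lemma pair_coords_nodup m ps : NoDup ps ->
  (forall x y, In x ps -> In y ps -> x <> (y + m)%nat) -> NoDup (pair_coords m ps).
Proof.
  induction ps as [|n ps IH]; intros Hnd Hc; simpl; [constructor|].
  inversion Hnd as [|? ? Hn Hps]; subst.
  change (NoDup (n :: (n + m)%nat :: pair_coords m ps)).
  assert (Hnotin : forall z, In z (pair_coords m ps) -> z <> n /\ z <> (n + m)%nat).
  { intros z Hz. apply in_pair_coords in Hz as [y [Hy [-> | ->]]].
    all: split.
    - intros ->. contradiction.
    - apply (Hc y n); simpl; auto.
    - apply not_eq_sym, (Hc n y); simpl; auto.
    - intro E. assert (y = n) by lia. subst. contradiction. }
  constructor; [|constructor].
  - intros [H | H]; [apply (Hc n n); simpl; auto|]. apply Hnotin in H; tauto.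
  - intro H. apply Hnotin in H; tauto.
  - apply IH; auto. intros x y Hx Hy; apply Hc; simpl; auto.
Qed.

Lemma half_block_pair_coords_nodup m p M : (1 <= m)%nat ->
  NoDup (pair_coords m (half_block m p M)).
Proof.
  intro Hm. apply pair_coords_nodup; [apply NoDup_filter, seq_NoDup|].
  intros x y Hx Hy E. unfold half_block in Hx, Hy. apply filter_In in Hx, Hy.
  destruct Hx as [Hx1 Hx2], Hy as [Hy1 Hy2]. apply in_seq in Hx1, Hy1. subst x.
  replace (y + m - 1)%nat with ((y - 1) + 1 * m)%nat in Hx2 by lia.
  rewrite Nat.div_add, Nat.add_1_r, Nat.even_succ, <- Nat.negb_even in Hx2 by lia.
  destruct (Nat.even ((y - 1) / m)), p; discriminate.
Qed.

Definition half_sum (sg : nat -> R) (w : Omega) (m : nat) (p : bool) (d : nat -> R) (M : nat) : R :=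
  lsum (fun n => d n * Y sg w (n + m) * Y sg w n) (half_block m p M).

Lemma rsum_half_sums sg w m M (f : nat -> R) :
  rsum (fun n => Y sg w (n + m) * Y sg w n * f n) M =
  half_sum sg w m true f M + half_sum sg w m false f M.
Proof.
  rewrite rsum_lsum. unfold half_sum, half_block.
  rewrite (lsum_filter_split (fun n => Nat.even ((n - 1) / m))).
  f_equal; apply lsum_ext; intros; ring.
Qed.

Lemma half_sum_opp sg w m p M (f : nat -> R) :
  half_sum sg w m p (fun n => - f n) M = - half_sum sg w m p f M.
Proof.
  unfold half_sum. replace (- lsum _ _) with (-1 * lsum (fun n => f n * Y sg w (n + m) * Y sg w n)
    (half_block m p M)) by ring.
  rewrite <- lsum_scal. apply lsum_ext; intros; ring.
Qed.

Lemma exp_le x y : x <= y -> exp x <= exp y.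
Proof. intros [H | ->]; [apply Rlt_le, exp_increasing, H | lra]. Qed.

Lemma ln_le x y : 0 < x -> x <= y -> ln x <= ln y.
Proof. intros Hx [H | ->]; [apply Rlt_le, ln_increasing; auto | lra]. Qed.

Lemma Rpower_pos x y : 0 < Rpower x y.
Proof. apply exp_pos. Qed.

Lemma Rpower_le_base_nonpos x y e : 0 < x -> x <= y -> e <= 0 -> Rpower y e <= Rpower x e.
Proof.
  intros Hx Hxy He. apply exp_le.
  assert (ln x <= ln y) by (apply ln_le; auto). nra.
Qed.

(* Comparison with the integral of [x^(b-1)], one unit step at a time by the mean value theorem. *)
Lemma lsum_Rpower_le b M : 0 < b < 1 -> (1 <= M)%nat ->
  lsum (fun n => Rpower (INR n) (b - 1)) (seq 1 M) <= Rpower (INR M) b / b.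
Proof.
  intros Hb HM. induction M as [|M IH]; [lia|].
  destruct (Nat.eq_dec M 0) as [-> | HM0].
  - simpl. unfold Rpower. rewrite ln_1, !Rmult_0_r, exp_0.
    apply (Rmult_le_reg_l b); [lra|]. field_simplify; lra.
  - rewrite seq_S, lsum_app. cbn [lsum]. rewrite Rplus_0_r.
    replace (1 + M)%nat with (S M) by lia. rewrite S_INR.
    assert (HM1 : 1 <= INR M) by (apply (le_INR 1); lia).
    assert (Hd : forall c, INR M <= c <= INR M + 1 ->
      derivable_pt_lim (fun x => Rpower x b) c (b * Rpower c (b - 1))).
    { intros c Hc; apply derivable_pt_lim_power; lra. }
    destruct (MVT_cor2 _ (fun c => b * Rpower c (b - 1)) (INR M) (INR M + 1) ltac:(lra) Hd)
      as [c [Hc1 Hc2]].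
    assert (Rpower (INR M + 1) (b - 1) <= Rpower c (b - 1)) by (apply Rpower_le_base_nonpos; lra).
    assert (E : Rpower (INR M + 1) b / b = Rpower (INR M) b / b + Rpower c (b - 1)).
    { replace (Rpower (INR M + 1) b) with (Rpower (INR M) b + b * Rpower c (b - 1)) by lra.
      field. lra. }
    rewrite E. specialize (IH ltac:(lia)). lra.
Qed.

Definition variance_bound (K a : R) (N : nat) : R :=
  K ^ 2 * Rpower (INR N) (1 - 2 * a) / (1 - 2 * a).

Lemma variance_bound_nonneg K a N : a < 1/2 -> 0 <= variance_bound K a N.
Proof.
  intro Ha. unfold variance_bound, Rdiv.
  apply Rmult_le_pos; [apply Rmult_le_pos; [nra | apply Rlt_le, Rpower_pos]|].
  apply Rlt_le, Rinv_0_lt_compat; lra.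
Qed.

Section Variance.
Variable sg : nat -> R.
Hypothesis Hs : forall n, (1 <= n)%nat -> 0 <= sg n <= 1.
Variables K a : R.
Hypothesis Ha : 0 < a < 1/2.
Hypothesis HK : 0 <= K.
Hypothesis HsK : forall k, (1 <= k)%nat -> sg k <= K * Rpower (INR k) (- a).

Lemma sigma_pair_le n m : (1 <= n)%nat ->
  sg n * sg (n + m)%nat <= K ^ 2 * Rpower (INR n) ((1 - 2 * a) - 1).
Proof.
  intro Hn. assert (Hn1 : 1 <= INR n) by (apply (le_INR 1); lia).
  assert (Hnm : INR n <= INR (n + m)) by (apply le_INR; lia).
  assert (H1 := HsK n Hn). assert (H2 := HsK (n + m)%nat ltac:(lia)).
  assert (Rpower (INR (n + m)) (- a) <= Rpower (INR n) (- a)) by (apply Rpower_le_base_nonpos; lra).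
  assert (B1 := Hs n Hn). assert (B2 := Hs (n + m)%nat ltac:(lia)).
  assert (P := Rpower_pos (INR n) (- a)).
  replace ((1 - 2 * a) - 1) with (- a + - a) by ring. rewrite Rpower_plus.
  set (r := Rpower (INR n) (- a)) in *.
  assert (sg (n + m)%nat <= K * r) by nra.
  assert (sg n * sg (n + m)%nat <= sg n * (K * r)) by (apply Rmult_le_compat_l; lra).
  assert (sg n * (K * r) <= (K * r) * (K * r)) by (apply Rmult_le_compat_r; nra).
  nra.
Qed.

Lemma half_block_variance_le m p N : (1 <= m <= N)%nat ->
  lsum (fun n => sg n * sg (n + m)%nat) (half_block m p (N - m)) <= variance_bound K a N.
Proof.
  intro Hm. assert (HV := variance_bound_nonneg K a N (proj2 Ha)).
  eapply Rle_trans; [apply lsum_filter_le|].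
  { intros n Hn. apply in_seq in Hn. apply Rmult_le_pos; apply Hs; lia. }
  destruct (Nat.eq_dec (N - m) 0) as [E | E]; [rewrite E; simpl; exact HV|].
  eapply Rle_trans.
  { apply lsum_le. intros n Hn. apply in_seq in Hn. apply sigma_pair_le. lia. }
  rewrite lsum_scal.
  assert (HS := lsum_Rpower_le (1 - 2 * a) (N - m) ltac:(lra) ltac:(lia)).
  assert (Rpower (INR (N - m)) (1 - 2 * a) <= Rpower (INR N) (1 - 2 * a)).
  { apply Rle_Rpower_l; [lra|]. split; [apply lt_0_INR; lia | apply le_INR; lia]. }
  unfold variance_bound. unfold Rdiv in *.
  assert (0 < / (1 - 2 * a)) by (apply Rinv_0_lt_compat; lra).
  assert (0 <= K ^ 2) by nra.
  apply Rle_trans with (K ^ 2 * (Rpower (INR (N - m)) (1 - 2 * a) * / (1 - 2 * a))).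
  - apply Rmult_le_compat_l; auto.
  - rewrite <- Rmult_assoc. apply Rmult_le_compat_r; [lra|]. apply Rmult_le_compat_l; auto.
Qed.

End Variance.

(** * Tail bound for a half sum *)

(* With [W = V + 4 ln N], [theta = sqrt (ln N / W)] and [lambda = 8 sqrt (W ln N)] one has
   [theta lambda = 8 ln N] and [2 theta^2 V <= 2 ln N], while the [4 ln N] keeps [theta <= 1/2]. *)
Definition padded_variance (K a : R) (N : nat) : R := variance_bound K a N + 4 * ln (INR N).
Definition chernoff_param (K a : R) (N : nat) : R := sqrt (ln (INR N) / padded_variance K a N).
Definition threshold (K a : R) (N : nat) : R := 8 * sqrt (padded_variance K a N * ln (INR N)).

Lemma ln_pos_of_ge2 N : (2 <= N)%nat -> 0 < ln (INR N).
Proof.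
  intro HN. rewrite <- ln_1. apply ln_increasing; [lra|]. apply (lt_INR 1); lia.
Qed.

Section ChernoffParameters.
Variables (K a : R) (N : nat).
Hypothesis Ha : a < 1/2.
Hypothesis HN : (2 <= N)%nat.

Let V := variance_bound K a N.
Let W := padded_variance K a N.
Let th := chernoff_param K a N.

Lemma padded_variance_pos : 0 < W.
Proof.
  assert (HV := variance_bound_nonneg K a N Ha). assert (HL := ln_pos_of_ge2 N HN).
  unfold W, padded_variance. lra.
Qed.

Lemma chernoff_param_sq : th * th = ln (INR N) / W.
Proof.
  assert (HW := padded_variance_pos). assert (HL := ln_pos_of_ge2 N HN).
  apply sqrt_sqrt. unfold Rdiv; apply Rmult_le_pos; [lra | apply Rlt_le, Rinv_0_lt_compat; lra].
Qed.

Lemma chernoff_param_range : 0 <= th <= 1/2.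
Proof.
  assert (HW := padded_variance_pos). assert (HL := ln_pos_of_ge2 N HN).
  assert (HV := variance_bound_nonneg K a N Ha).
  assert (H0 : 0 <= th) by apply sqrt_pos.
  assert (th * th <= 1/4).
  { rewrite chernoff_param_sq. apply (Rmult_le_reg_r W); [lra|]. unfold Rdiv.
    rewrite Rmult_assoc, Rinv_l by lra. unfold W, padded_variance. lra. }
  nra.
Qed.

Lemma chernoff_param_threshold : th * threshold K a N = 8 * ln (INR N).
Proof.
  assert (HW := padded_variance_pos). assert (HL := ln_pos_of_ge2 N HN).
  unfold th, chernoff_param, threshold. fold W.
  replace (sqrt (ln (INR N) / W) * (8 * sqrt (W * ln (INR N))))
    with (8 * (sqrt (ln (INR N) / W) * sqrt (W * ln (INR N)))) by ring.
  rewrite <- sqrt_mult_alt.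
  2: { unfold Rdiv; apply Rmult_le_pos; [lra | apply Rlt_le, Rinv_0_lt_compat; lra]. }
  replace (ln (INR N) / W * (W * ln (INR N))) with (Rsqr (ln (INR N))) by (unfold Rsqr; field; lra).
  rewrite sqrt_Rsqr by lra. reflexivity.
Qed.

Lemma chernoff_param_sq_variance : th ^ 2 * V <= ln (INR N).
Proof.
  assert (HW := padded_variance_pos). assert (HL := ln_pos_of_ge2 N HN).
  assert (HV := variance_bound_nonneg K a N Ha).
  replace (th ^ 2) with (th * th) by ring. rewrite chernoff_param_sq. unfold Rdiv.
  apply (Rmult_le_reg_r W); [lra|].
  replace (ln (INR N) * / W * V * W) with (ln (INR N) * V) by (field; lra).
  unfold W, padded_variance. fold V. nra.
Qed.

End ChernoffParameters.

Lemma inv_pow_eq_exp_ln N k : (1 <= N)%nat -> / INR N ^ k = exp (- (INR k * ln (INR N))).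
Proof.
  intro HN. assert (0 < INR N) by (apply lt_0_INR; lia).
  rewrite exp_Ropp, <- Rpower_pow by lra. reflexivity.
Qed.

Lemma expect_exp_half_sum_le sg K a N m p (d : nat -> R) w :
  (forall k, (1 <= k)%nat -> 0 <= sg k <= 1) -> 0 < a < 1/2 -> 0 <= K ->
  (forall k, (1 <= k)%nat -> sg k <= K * Rpower (INR k) (- a)) ->
  (2 <= N)%nat -> (1 <= m <= N)%nat -> (forall n, Rabs (d n) <= 1) ->
  expect sg (seq 1 N)
    (fun w => exp (chernoff_param K a N * (half_sum sg w m p d (N - m) - threshold K a N))) w
  <= / INR N ^ 6.
Proof.
  intros Hs Ha HK HsK HN Hm Hd.
  set (th := chernoff_param K a N). set (lam := threshold K a N).
  assert (Hth := chernoff_param_range K a N (proj2 Ha) HN).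
  replace (fun w => exp (th * (half_sum sg w m p d (N - m) - lam)))
    with (fun w => exp (- (th * lam)) * exp (th * half_sum sg w m p d (N - m)))
    by (extensionality v; rewrite <- exp_plus; f_equal; ring).
  rewrite expect_scal.
  eapply Rle_trans.
  { apply Rmult_le_compat_l; [apply Rlt_le, exp_pos|].
    apply expect_exp_pair_sum_le; auto; [lia| |apply half_block_pair_coords_nodup; lia].
    intros n Hn. apply filter_In in Hn as [Hn _]. apply in_seq in Hn. lia. }
  rewrite <- exp_plus, inv_pow_eq_exp_ln by lia. apply exp_le.
  assert (Hthl := chernoff_param_threshold K a N (proj2 Ha) HN). fold th lam in Hthl.
  assert (HV := half_block_variance_le sg Hs K a Ha HK HsK m p N Hm).
  assert (Hsq := chernoff_param_sq_variance K a N (proj2 Ha) HN). fold th in Hsq.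
  assert (th ^ 2 * lsum (fun n => sg n * sg (n + m)%nat) (half_block m p (N - m))
          <= th ^ 2 * variance_bound K a N) by (apply Rmult_le_compat_l; [nra | exact HV]).
  simpl INR. lra.
Qed.

(** * Discretising the frequency *)

Lemma lipschitz_of_derive_bound (f f' : R -> R) :
  (forall x, derivable_pt_lim f x (f' x)) -> (forall x, Rabs (f' x) <= 1) ->
  forall x y, Rabs (f x - f y) <= Rabs (x - y).
Proof.
  intros Hf Hf'.
  assert (Hlt : forall x y, x < y -> Rabs (f x - f y) <= Rabs (x - y)).
  { intros x y Hxy. destruct (MVT_cor2 f f' x y Hxy (fun c _ => Hf c)) as [c [Hc _]].
    rewrite Rabs_minus_sym, Hc, Rabs_mult, (Rabs_minus_sym x y).
    assert (H1 := Hf' c). assert (0 <= Rabs (y - x)) by apply Rabs_pos. nra. }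
  intros x y. destruct (Rtotal_order x y) as [H | [-> | H]].
  - apply Hlt, H.
  - rewrite !Rminus_diag. lra.
  - rewrite Rabs_minus_sym, (Rabs_minus_sym x). apply Hlt, H.
Qed.

Lemma cos_lipschitz x y : Rabs (cos x - cos y) <= Rabs (x - y).
Proof.
  apply (lipschitz_of_derive_bound cos (fun z => - sin z)); [apply derivable_pt_lim_cos|].
  intro z. rewrite Rabs_Ropp. apply Rabs_le, SIN_bound.
Qed.

Lemma sin_lipschitz x y : Rabs (sin x - sin y) <= Rabs (x - y).
Proof.
  apply (lipschitz_of_derive_bound sin cos); [apply derivable_pt_lim_sin|].
  intro z. apply Rabs_le, COS_bound.
Qed.

Lemma grid_point_near t G : 0 <= t <= 1 -> (1 <= G)%nat ->
  exists g, (g <= G)%nat /\ Rabs (t - INR g / INR G) <= 1 / INR G.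
Proof.
  intros Ht HG. assert (HG0 : 0 < INR G) by (apply lt_0_INR; lia).
  assert (Hnear : forall G' x, 0 <= x <= INR G' ->
                  exists g, (g <= G')%nat /\ Rabs (x - INR g) <= 1).
  { induction G' as [|G' IH]; intros x Hx.
    - exists 0%nat. split; [lia|]. simpl in *. apply Rabs_le; lra.
    - rewrite S_INR in Hx. destruct (Rle_dec x (INR G')) as [H | H].
      + destruct (IH x ltac:(lra)) as [g [Hg1 Hg2]]. exists g; split; [lia | exact Hg2].
      + exists (S G'). split; [lia|]. rewrite S_INR. apply Rabs_le; lra. }
  destruct (Hnear G (t * INR G)) as [g [Hg Hgt]]; [split; nra|].
  exists g. split; [exact Hg|].
  replace (t - INR g / INR G) with ((t * INR G - INR g) * / INR G) by (field; lra).
  rewrite Rabs_mult, (Rabs_right (/ INR G)) by (apply Rle_ge, Rlt_le, Rinv_0_lt_compat; lra).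
  unfold Rdiv. rewrite Rmult_1_l. assert (0 < / INR G) by (apply Rinv_0_lt_compat; lra). nra.
Qed.

Lemma Y_bound sg w n : (forall k, (1 <= k)%nat -> 0 <= sg k <= 1) -> (1 <= n)%nat ->
  Rabs (Y sg w n) <= 1.
Proof.
  intros Hs Hn. unfold Y, X. destruct (Hs n Hn). apply Rabs_le. destruct (w n); lra.
Qed.

Lemma Rabs_rsum_diff_le f g M c :
  (forall n, (1 <= n <= M)%nat -> Rabs (f n - g n) <= c) ->
  Rabs (rsum f M - rsum g M) <= INR M * c.
Proof.
  induction M; intro H; simpl rsum.
  - simpl. rewrite Rminus_0_r, Rabs_R0. lra.
  - rewrite S_INR.
    replace (rsum f M + f (S M) - (rsum g M + g (S M)))
      with ((rsum f M - rsum g M) + (f (S M) - g (S M))) by ring.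
    eapply Rle_trans; [apply Rabs_triang|].
    assert (H1 := IHM (fun n Hn => H n ltac:(lia))). assert (H2 := H (S M) ltac:(lia)). lra.
Qed.

Lemma sqrt_sum_sq_le x y : sqrt (x * x + y * y) <= Rabs x + Rabs y.
Proof.
  assert (0 <= Rabs x) by apply Rabs_pos. assert (0 <= Rabs y) by apply Rabs_pos.
  rewrite <- (sqrt_Rsqr (Rabs x + Rabs y)) by lra.
  apply sqrt_le_1_alt. unfold Rsqr.
  assert (E1 : x * x = Rabs x * Rabs x) by (rewrite <- Rabs_mult, Rabs_right; nra).
  assert (E2 : y * y = Rabs y * Rabs y) by (rewrite <- Rabs_mult, Rabs_right; nra).
  nra.
Qed.

Definition fourier_part sg (w : Omega) (m : nat) (h : R -> R) (t : R) (M : nat) : R :=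
  rsum (fun n => Y sg w (n + m) * Y sg w n * h (2 * PI * INR n * t)) M.

Lemma corr_sum_abs_fourier sg w N m t :
  corr_sum_abs sg w N m t =
  sqrt (fourier_part sg w m cos t (N - m) * fourier_part sg w m cos t (N - m) +
        fourier_part sg w m sin t (N - m) * fourier_part sg w m sin t (N - m)).
Proof. reflexivity. Qed.

Lemma fourier_part_lipschitz sg w N m h t t' :
  (forall k, (1 <= k)%nat -> 0 <= sg k <= 1) ->
  (forall x y, Rabs (h x - h y) <= Rabs (x - y)) -> (1 <= m <= N)%nat ->
  Rabs (t - t') <= 1 / (8 * INR N * INR N) ->
  Rabs (fourier_part sg w m h t (N - m) - fourier_part sg w m h t' (N - m)) <= 1.
Proof.
  intros Hs Hh Hm Htt.
  assert (HN : 1 <= INR N) by (apply (le_INR 1); lia).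
  assert (HMN : INR (N - m) <= INR N) by (apply le_INR; lia).
  assert (0 <= INR (N - m)) by apply pos_INR.
  assert (Hpi := PI_4). assert (Hpi0 := PI_RGT_0).
  eapply Rle_trans; [apply (Rabs_rsum_diff_le _ _ _ (2 * PI * INR N * (1 / (8 * INR N * INR N))))|].
  - intros n Hn.
    rewrite <- Rmult_minus_distr_l, !Rabs_mult.
    assert (Y1 := Y_bound sg w (n + m) Hs ltac:(lia)).
    assert (Y2 := Y_bound sg w n Hs ltac:(lia)).
    assert (H1 := Hh (2 * PI * INR n * t) (2 * PI * INR n * t')).
    rewrite <- Rmult_minus_distr_l, Rabs_mult, (Rabs_right (2 * PI * INR n)) in H1
      by (assert (0 <= INR n) by apply pos_INR; nra).
    assert (HnN : INR n <= INR N) by (apply le_INR; lia).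
    assert (0 <= INR n) by apply pos_INR. assert (0 <= Rabs (t - t')) by apply Rabs_pos.
    assert (2 * PI * INR n * Rabs (t - t') <= 2 * PI * INR N * (1 / (8 * INR N * INR N)))
      by (apply Rmult_le_compat; nra).
    assert (0 <= Rabs (Y sg w (n + m))) by apply Rabs_pos.
    assert (0 <= Rabs (Y sg w n)) by apply Rabs_pos.
    assert (0 <= Rabs (h (2 * PI * INR n * t) - h (2 * PI * INR n * t'))) by apply Rabs_pos.
    assert (Rabs (Y sg w (n + m)) * Rabs (Y sg w n) <= 1) by nra.
    nra.
  - replace (INR (N - m) * (2 * PI * INR N * (1 / (8 * INR N * INR N))))
      with (INR (N - m) / INR N * (PI / 4)) by (field; lra).
    assert (INR (N - m) / INR N <= 1).
    { apply (Rmult_le_reg_r (INR N)); [lra|]. field_simplify; lra. }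
    assert (0 <= INR (N - m) / INR N)
      by (apply Rmult_le_pos; [lra | apply Rlt_le, Rinv_0_lt_compat; lra]).
    nra.
Qed.

Definition signed_waves (t : R) : list (nat -> R) :=
  (fun n => cos (2 * PI * INR n * t)) :: (fun n => - cos (2 * PI * INR n * t)) ::
  (fun n => sin (2 * PI * INR n * t)) :: (fun n => - sin (2 * PI * INR n * t)) :: nil.

Lemma signed_waves_bound t d n : In d (signed_waves t) -> Rabs (d n) <= 1.
Proof.
  assert (Hc := COS_bound (2 * PI * INR n * t)). assert (Hs := SIN_bound (2 * PI * INR n * t)).
  intros [<- | [<- | [<- | [<- | []]]]]; apply Rabs_le; lra.
Qed.

Lemma Rabs_fourier_part_le sg w m h t M lam :
  (forall p, half_sum sg w m p (fun n => h (2 * PI * INR n * t)) M <= lam) ->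
  (forall p, half_sum sg w m p (fun n => - h (2 * PI * INR n * t)) M <= lam) ->
  Rabs (fourier_part sg w m h t M) <= 2 * lam.
Proof.
  intros Hpos Hneg. unfold fourier_part. rewrite rsum_half_sums.
  assert (N1 := Hneg true). assert (N2 := Hneg false).
  rewrite half_sum_opp in N1, N2.
  assert (P1 := Hpos true). assert (P2 := Hpos false).
  apply Rabs_le; lra.
Qed.

(* At [tg] the real and imaginary parts are at most [2 lam] (two half sums each), and each
   moves by at most [1] on the way to [t]. *)
Lemma corr_sum_abs_le_grid sg w N m t tg lam :
  (forall k, (1 <= k)%nat -> 0 <= sg k <= 1) -> (1 <= m <= N)%nat ->
  Rabs (t - tg) <= 1 / (8 * INR N * INR N) ->
  (forall p d, In d (signed_waves tg) -> half_sum sg w m p d (N - m) <= lam) ->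
  corr_sum_abs sg w N m t <= 4 * lam + 2.
Proof.
  intros Hs Hm Htg Hgrid.
  assert (Hbound : forall h, (forall x y, Rabs (h x - h y) <= Rabs (x - y)) ->
    In (fun n => h (2 * PI * INR n * tg)) (signed_waves tg) /\
    In (fun n => - h (2 * PI * INR n * tg)) (signed_waves tg) ->
    Rabs (fourier_part sg w m h t (N - m)) <= 2 * lam + 1).
  { intros h Hh Hin.
    assert (Hlip := fourier_part_lipschitz sg w N m h t tg Hs Hh Hm Htg).
    assert (Hgr : Rabs (fourier_part sg w m h tg (N - m)) <= 2 * lam).
    { apply Rabs_fourier_part_le; intro p; apply Hgrid, Hin. }
    assert (E := Rabs_triang (fourier_part sg w m h t (N - m) - fourier_part sg w m h tg (N - m))
                             (fourier_part sg w m h tg (N - m))).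
    replace (fourier_part sg w m h t (N - m) - fourier_part sg w m h tg (N - m) +
             fourier_part sg w m h tg (N - m)) with (fourier_part sg w m h t (N - m)) in E by ring.
    lra. }
  assert (Hc := Hbound cos cos_lipschitz ltac:(simpl; tauto)).
  assert (Hsn := Hbound sin sin_lipschitz ltac:(simpl; tauto)).
  rewrite corr_sum_abs_fourier. eapply Rle_trans; [apply sqrt_sum_sq_le | lra].
Qed.

(** * The exceptional events *)

Section BadEvents.
Variable sg : nat -> R.
Hypothesis Hs : forall n, (1 <= n)%nat -> 0 <= sg n <= 1.
Variables K a : R.

Definition grid_size (N : nat) : nat := (8 * N * N)%nat.

Definition bad_event (N : nat) (w : Omega) : Prop :=
  exists m, (1 <= m <= N)%nat /\
  exists t, 0 <= t <= 1 /\ 4 * threshold K a N + 2 < corr_sum_abs sg w N m t.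

Definition union_majorant (N : nat) (w : Omega) : R :=
  lsum (fun m => lsum (fun g => lsum (fun p => lsum (fun d =>
      exp (chernoff_param K a N * (half_sum sg w m p d (N - m) - threshold K a N)))
    (signed_waves (INR g / INR (grid_size N)))) (true :: false :: nil))
    (seq 0 (S (grid_size N)))) (seq 1 N).

Lemma union_majorant_ge_term N w m g p d :
  In m (seq 1 N) -> In g (seq 0 (S (grid_size N))) ->
  In d (signed_waves (INR g / INR (grid_size N))) ->
  exp (chernoff_param K a N * (half_sum sg w m p d (N - m) - threshold K a N))
  <= union_majorant N w.
Proof.
  intros Hm Hg Hd.
  assert (Hpos : forall A (l : list A) (f : A -> R), (forall x, 0 <= f x) -> 0 <= lsum f l)
    by (intros; apply lsum_nonneg; auto).
  unfold union_majorant.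
  eapply Rle_trans; [|apply lsum_ge_elem with (x := m); [|exact Hm]].
  2: { intro; repeat (apply Hpos; intro); apply Rlt_le, exp_pos. }
  eapply Rle_trans; [|apply lsum_ge_elem with (x := g); [|exact Hg]].
  2: { intro; repeat (apply Hpos; intro); apply Rlt_le, exp_pos. }
  eapply Rle_trans; [|apply lsum_ge_elem with (x := p); [|destruct p; simpl; tauto]].
  2: { intro; apply Hpos; intro; apply Rlt_le, exp_pos. }
  apply (lsum_ge_elem
    (fun d => exp (chernoff_param K a N * (half_sum sg w m p d (N - m) - threshold K a N))));
    [intro; apply Rlt_le, exp_pos | exact Hd].
Qed.

(* On the bad event some half sum at a grid frequency exceeds the threshold
   (by [corr_sum_abs_le_grid]), so one term of the majorant is at least [1]. *)
Lemma indic_bad_event_le N w : indic (bad_event N) w <= union_majorant N w.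
Proof.
  unfold indic.
  destruct (excluded_middle_informative (bad_event N w)) as [[m [Hm [t [Ht Hc]]]] | _].
  2: { unfold union_majorant. repeat (apply lsum_nonneg; intro). apply Rlt_le, exp_pos. }
  set (G := grid_size N).
  assert (HGr : INR G = 8 * INR N * INR N) by (unfold G, grid_size; rewrite !mult_INR; simpl; ring).
  destruct (grid_point_near t G Ht ltac:(unfold G, grid_size; nia)) as [g [Hg Htg]].
  replace (1 / INR G) with (1 / (8 * INR N * INR N)) in Htg by (rewrite HGr; reflexivity).
  destruct (classic (forall p d, In d (signed_waves (INR g / INR G)) ->
      half_sum sg w m p d (N - m) <= threshold K a N)) as [Hall | Hex].
  { exfalso. assert (H := corr_sum_abs_le_grid sg w N m t _ _ Hs Hm Htg Hall). lra. }
  apply not_all_ex_not in Hex as [p Hex]. apply not_all_ex_not in Hex as [d Hex].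
  apply imply_to_and in Hex as [Hd Hgt]. apply Rnot_le_lt in Hgt.
  assert (Hth : 0 <= chernoff_param K a N) by apply sqrt_pos.
  eapply Rle_trans; [|apply (union_majorant_ge_term N w m g p d); auto; apply in_seq; lia].
  rewrite <- exp_0. apply exp_le. apply Rmult_le_pos; lra.
Qed.

Hypothesis Ha : 0 < a < 1/2.
Hypothesis HK : 0 <= K.
Hypothesis HsK : forall k, (1 <= k)%nat -> sg k <= K * Rpower (INR k) (- a).

Lemma expect_union_majorant_le N w : (2 <= N)%nat ->
  expect sg (seq 1 N) (union_majorant N) w <= 72 / (INR N * (INR N - 1)).
Proof.
  intro HN. unfold union_majorant. rewrite expect_lsum.
  eapply Rle_trans.
  { apply (lsum_le_length _ _ (INR (S (grid_size N)) * (INR 2 * (INR 4 * / INR N ^ 6)))).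
    intros m Hm. apply in_seq in Hm. rewrite expect_lsum.
    eapply Rle_trans; [apply lsum_le_length | rewrite length_seq; apply Rle_refl].
    intros g Hg. rewrite expect_lsum.
    eapply Rle_trans; [apply lsum_le_length | apply Rle_refl].
    intros p Hp. rewrite expect_lsum.
    eapply Rle_trans; [apply lsum_le_length | apply Rle_refl].
    intros d Hd. apply expect_exp_half_sum_le; auto; [lia|].
    intro n. apply (signed_waves_bound _ _ _ Hd). }
  rewrite length_seq.
  assert (HN2 : 2 <= INR N) by (apply (le_INR 2); lia).
  replace (INR (S (grid_size N))) with (8 * INR N * INR N + 1)
    by (unfold grid_size; rewrite S_INR, !mult_INR; simpl; ring).
  set (x := INR N) in *. simpl INR.
  replace (x * ((8 * x * x + 1) * ((1 + 1) * ((1 + 1 + 1 + 1) * / x ^ 6))))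
    with ((64 * x * x + 8) / (x * x * x * x * x)) by (field; lra).
  assert (0 < x * x * x * x * x) by (repeat apply Rmult_lt_0_compat; lra).
  apply Rle_trans with (72 * x * x / (x * x * x * x * x)).
  - unfold Rdiv. apply Rmult_le_compat_r; [apply Rlt_le, Rinv_0_lt_compat|]; nra.
  - replace (72 * x * x / (x * x * x * x * x)) with (72 / (x * (x * x))) by (field; lra).
    unfold Rdiv. apply Rmult_le_compat_l; [lra|]. apply Rinv_le_contravar; nra.
Qed.

End BadEvents.

(** * Growth rate of the threshold *)

Lemma ln_le_Rpower_div b x : 0 < b -> 0 < x -> ln x <= Rpower x b / b.
Proof.
  intros Hb Hx. assert (E := exp_ineq1_le (ln (Rpower x b))).
  rewrite exp_ln, ln_Rpower in E by apply Rpower_pos.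
  apply (Rmult_le_reg_r b); [lra|]. unfold Rdiv. rewrite Rmult_assoc, Rinv_l by lra. lra.
Qed.

Lemma padded_variance_le K a N : 0 < a < 1/2 -> 0 <= K -> (2 <= N)%nat ->
  padded_variance K a N <= (K + 2) ^ 2 * Rpower (INR N) (1 - 2 * a) / (1 - 2 * a).
Proof.
  intros Ha HK HN. assert (HN0 : 0 < INR N) by (apply lt_0_INR; lia).
  assert (Hln := ln_le_Rpower_div (1 - 2 * a) (INR N) ltac:(lra) HN0).
  assert (0 <= K * Rpower (INR N) (1 - 2 * a) / (1 - 2 * a)).
  { unfold Rdiv. apply Rmult_le_pos; [apply Rmult_le_pos; [lra | apply Rlt_le, Rpower_pos]|].
    apply Rlt_le, Rinv_0_lt_compat; lra. }
  unfold padded_variance, variance_bound.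
  replace ((K + 2) ^ 2 * Rpower (INR N) (1 - 2 * a) / (1 - 2 * a))
    with (K ^ 2 * Rpower (INR N) (1 - 2 * a) / (1 - 2 * a) +
          4 * (K * Rpower (INR N) (1 - 2 * a) / (1 - 2 * a)) +
          4 * (Rpower (INR N) (1 - 2 * a) / (1 - 2 * a))) by (field; lra).
  lra.
Qed.

Lemma rate_ge_two_thirds a N : 0 < a < 1/2 -> (2 <= N)%nat ->
  2/3 <= Rpower (INR N) (1/2 - a) * sqrt (ln (INR N)).
Proof.
  intros Ha HN. assert (HN2 : 2 <= INR N) by (apply (le_INR 2); lia).
  assert (HP : 1 <= Rpower (INR N) (1/2 - a)).
  { rewrite <- (Rpower_O (INR N)) at 1 by lra. apply Rle_Rpower; lra. }
  assert (Hln : / 2 < ln (INR N)) by (eapply Rlt_le_trans; [apply ln_lt_2 | apply ln_le; lra]).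
  assert (E := sqrt_sqrt (ln (INR N)) ltac:(lra)).
  assert (0 <= sqrt (ln (INR N))) by apply sqrt_pos.
  assert (2/3 <= sqrt (ln (INR N))) by nra.
  nra.
Qed.

Lemma threshold_le_rate K a : 0 < a < 1/2 -> 0 <= K ->
  exists C0, 0 <= C0 /\ forall N, (2 <= N)%nat ->
    4 * threshold K a N + 2 <= C0 * Rpower (INR N) (1/2 - a) * sqrt (ln (INR N)).
Proof.
  intros Ha HK. set (b := 1 - 2 * a).
  set (rb := sqrt b). assert (Hrb : 0 < rb) by (apply sqrt_lt_R0; unfold b; lra).
  assert (Hrb2 : rb * rb = b) by (apply sqrt_sqrt; unfold b; lra).
  exists (32 * (K + 2) / rb + 3). split.
  { unfold Rdiv. assert (0 < / rb) by (apply Rinv_0_lt_compat; lra). nra. }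
  intros N HN.
  set (P := Rpower (INR N) (1/2 - a)). set (s := sqrt (ln (INR N))).
  assert (HL := ln_pos_of_ge2 N HN).
  assert (HPs := rate_ge_two_thirds a N Ha HN). fold P s in HPs.
  assert (HP : 0 < P) by apply Rpower_pos. assert (Hs0 : 0 <= s) by apply sqrt_pos.
  assert (HPP : P * P = Rpower (INR N) b).
  { unfold P, b. rewrite <- Rpower_plus. f_equal. field. }
  assert (Hss : s * s = ln (INR N)) by (apply sqrt_sqrt; lra).
  assert (Hsq : sqrt (padded_variance K a N * ln (INR N)) <= (K + 2) * P * s / rb).
  { rewrite <- (sqrt_Rsqr ((K + 2) * P * s / rb)).
    2: { unfold Rdiv. apply Rmult_le_pos; [|apply Rlt_le, Rinv_0_lt_compat; lra].
         apply Rmult_le_pos; [apply Rmult_le_pos|]; lra. }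
    apply sqrt_le_1_alt. unfold Rsqr.
    replace ((K + 2) * P * s / rb * ((K + 2) * P * s / rb))
      with ((K + 2) ^ 2 * (P * P) / (rb * rb) * (s * s)) by (field; lra).
    rewrite Hrb2, HPP, Hss. apply Rmult_le_compat_r; [lra|].
    apply padded_variance_le; auto. }
  unfold threshold. fold P s.
  replace ((32 * (K + 2) / rb + 3) * P * s) with (32 * ((K + 2) * P * s / rb) + 3 * (P * s))
    by (field; lra).
  lra.
Qed.

Lemma rsum_ext f g M : (forall n, (1 <= n <= M)%nat -> f n = g n) -> rsum f M = rsum g M.
Proof.
  induction M; intro H; simpl; [reflexivity|]. rewrite IHM, H; auto; [lia|].
  intros; apply H; lia.
Qed.

Lemma corr_sum_abs_ext sg w w' N m t : (m <= N)%nat ->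
  (forall i, (1 <= i <= N)%nat -> w i = w' i) ->
  corr_sum_abs sg w N m t = corr_sum_abs sg w' N m t.
Proof.
  intros Hm Hww. rewrite !corr_sum_abs_fourier.
  assert (E : forall h, fourier_part sg w m h t (N - m) = fourier_part sg w' m h t (N - m)).
  { intro h. apply rsum_ext. intros n Hn. unfold Y, X. rewrite !Hww by lia. reflexivity. }
  rewrite !E. reflexivity.
Qed.

Lemma bad_event_depends_on_prefix sg K a N : depends_on_prefix N (bad_event sg K a N).
Proof.
  intros w w' Hww [m [Hm [t [Ht Hc]]]]. exists m. split; [exact Hm|]. exists t. split; [exact Ht|].
  rewrite <- (corr_sum_abs_ext sg w w' N m t); [exact Hc | lia | exact Hww].
Qed.

Lemma corr_sum_abs_le_length sg w N m t :
  (forall k, (1 <= k)%nat -> 0 <= sg k <= 1) -> (1 <= m <= N)%nat ->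
  corr_sum_abs sg w N m t <= 2 * INR N.
Proof.
  intros Hs Hm. rewrite corr_sum_abs_fourier.
  eapply Rle_trans; [apply sqrt_sum_sq_le|].
  assert (HMN : INR (N - m) <= INR N) by (apply le_INR; lia).
  assert (H : forall h : R -> R, (forall x, Rabs (h x) <= 1) ->
    Rabs (fourier_part sg w m h t (N - m)) <= INR N).
  { intros h Hh. unfold fourier_part.
    rewrite <- (Rminus_0_r (rsum _ _)), <- (Rmult_1_r (INR N)).
    replace 0 with (rsum (fun _ => 0) (N - m)) by (clear; induction (N - m)%nat; simpl; lra).
    eapply Rle_trans; [apply Rabs_rsum_diff_le | apply Rmult_le_compat_r; lra].
    intros n Hn. rewrite Rminus_0_r, !Rabs_mult.
    assert (Y1 := Y_bound sg w (n + m) Hs ltac:(lia)).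
    assert (Y2 := Y_bound sg w n Hs ltac:(lia)).
    assert (H3 := Hh (2 * PI * INR n * t)).
    assert (0 <= Rabs (Y sg w (n + m))) by apply Rabs_pos.
    assert (0 <= Rabs (Y sg w n)) by apply Rabs_pos.
    assert (0 <= Rabs (h (2 * PI * INR n * t))) by apply Rabs_pos.
    assert (Rabs (Y sg w (n + m)) * Rabs (Y sg w n) <= 1) by nra. nra. }
  assert (H1 := H cos (fun x => Rabs_le _ _ (COS_bound x))).
  assert (H2 := H sin (fun x => Rabs_le _ _ (SIN_bound x))).
  lra.
Qed.

Lemma corr_bound_of_sigma_le (sigma : nat -> R) (a K : R)
  (Hsig : forall n : nat, (1 <= n)%nat -> 0 <= sigma n <= 1)
  (Ha : 0 < a < 1 / 2) (HK : 0 <= K)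
  (HsK : forall k, (1 <= k)%nat -> sigma k <= K * Rpower (INR k) (- a)) :
  almost_surely sigma (fun omega =>
    exists C : R, forall N : nat, (2 <= N)%nat ->
      forall m : nat, (1 <= m <= N)%nat ->
      forall t : R, 0 <= t <= 1 ->
        corr_sum_abs sigma omega N m t
          <= C * Rpower (INR N) (1 / 2 - a) * sqrt (ln (INR N))).
Proof.
  destruct (threshold_le_rate K a Ha HK) as [C0 [HC0 Hrate]].
  apply (almost_surely_mono sigma (fun w => exists N0, forall N, (N0 <= N)%nat ->
                                     ~ bad_event sigma K a N w)).
  2: { apply (borel_cantelli sigma Hsig _ 72); [lra | apply bad_event_depends_on_prefix|].
       intros N w HN. eapply Rle_trans; [|apply (expect_union_majorant_le sigma Hsig K a); auto].
       apply expect_le; [intros i Hi; apply in_seq in Hi; apply Hsig; lia|].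
       intro v. apply indic_bad_event_le, Hsig. }
  intros w [N0 HN0]. exists (C0 + 3 * INR N0). intros N HN m Hm t Ht.
  assert (HPs := rate_ge_two_thirds a N Ha HN).
  set (P := Rpower (INR N) (1 / 2 - a)) in *. set (s := sqrt (ln (INR N))) in *.
  assert (0 <= INR N0) by apply pos_INR.
  assert (0 <= C0 * P * s) by (rewrite Rmult_assoc; apply Rmult_le_pos; lra).
  replace ((C0 + 3 * INR N0) * P * s) with (C0 * P * s + 3 * INR N0 * (P * s)) by ring.
  destruct (Nat.le_gt_cases N0 N) as [HNN | HNN].
  - assert (Hgood : corr_sum_abs sigma w N m t <= 4 * threshold K a N + 2).
    { apply Rnot_lt_le. intro Hc. apply (HN0 N HNN). exists m. split; [exact Hm|].
      exists t. split; [exact Ht | exact Hc]. }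
    assert (Hr := Hrate N HN). fold P s in Hr. nra.
  - assert (Hs := corr_sum_abs_le_length sigma w N m t Hsig Hm).
    assert (INR N <= INR N0) by (apply le_INR; lia). nra.
Qed.

Lemma sigma_le_power (sigma : nat -> R) (a L : R)
  (Hsig : forall n : nat, (1 <= n)%nat -> 0 <= sigma n <= 1) (Ha : 0 < a)
  (Hasym : Un_cv (fun n : nat => sigma (S n) / Rpower (INR (S n)) (- a)) L) :
  exists K, 0 <= K /\ forall k, (1 <= k)%nat -> sigma k <= K * Rpower (INR k) (- a).
Proof.
  destruct (Hasym 1 Rlt_0_1) as [n1 Hn1].
  set (q := Rpower (INR (S n1)) (- a)).
  assert (Hq : 0 < / q) by apply Rinv_0_lt_compat, Rpower_pos.
  assert (HL : 0 <= Rabs L) by apply Rabs_pos.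
  exists (Rabs L + 1 + / q). split; [lra|].
  intros k Hk. destruct k as [|n]; [lia|].
  assert (Hp := Rpower_pos (INR (S n)) (- a)).
  destruct (Nat.le_gt_cases n1 n) as [Hc | Hc].
  - specialize (Hn1 n ltac:(lia)). unfold R_dist in Hn1. apply Rabs_def2 in Hn1.
    assert (L <= Rabs L) by apply RRle_abs.
    assert (sigma (S n) < (Rabs L + 1) * Rpower (INR (S n)) (- a)).
    { apply (Rmult_lt_reg_r (/ Rpower (INR (S n)) (- a))); [apply Rinv_0_lt_compat, Hp|].
      rewrite Rmult_assoc, Rinv_r by lra. unfold Rdiv in Hn1. lra. }
    nra.
  - assert (q <= Rpower (INR (S n)) (- a)).
    { apply Rpower_le_base_nonpos; [apply lt_0_INR; lia | apply le_INR; lia | lra]. }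
    assert (1 <= / q * Rpower (INR (S n)) (- a)).
    { apply (Rmult_le_reg_l q); [apply Rpower_pos|]. rewrite <- Rmult_assoc, Rinv_r; [lra|].
      apply Rgt_not_eq, Rpower_pos. }
    destruct (Hsig (S n) ltac:(lia)). nra.
Qed.

Theorem proposition3p2 (sigma : nat -> R) (a L : R)
  (Hsig : forall n : nat, (1 <= n)%nat -> 0 <= sigma n <= 1)
  (Ha : 0 < a < 1 / 2)
  (HL : L <> 0)
  (Hasym : Un_cv (fun n : nat => sigma (S n) / Rpower (INR (S n)) (- a)) L) :
  almost_surely sigma (fun omega =>
    exists C : R, forall N : nat, (2 <= N)%nat ->
      forall m : nat, (1 <= m <= N)%nat ->
      forall t : R, 0 <= t <= 1 ->
        corr_sum_abs sigma omega N m t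
          <= C * Rpower (INR N) (1 / 2 - a) * sqrt (ln (INR N))).
Proof.
  destruct (sigma_le_power sigma a L Hsig (proj1 Ha) Hasym) as [K [HK HsK]].
  exact (corr_bound_of_sigma_le sigma a K Hsig Ha HK HsK).
Qed.
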